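(* Let $A\in\mathbb{R}^{n\times n}$, let $s$ be an integer with $1\leq s<d(A)$, and let $v_0\in\mathbb{R}^n$ with $\|v_0\|=1$ and $d(A,v_0)\geq s+1$. Then the normalized vectors of the Arnoldi cross iteration ACI($s$) started at $v_0$ satisfy $$\lim_{k\to\infty}\|w_{k+1}-w_k\|=0\quad\text{and}\quad\lim_{k\to\infty}\|v_{k+1}-v_k\|=0.$$
   Context: Notation: for $A\in\mathbb{R}^{n\times n}$, $d(A)$ is the degree of the minimal polynomial of $A$, $d(A,v)$ is the grade of $v$ w.r.t. $A$ (degree of the monic polynomial $p$ of smallest degree with $p(A)v=0$), $\mathcal{K}_k(A,v)=\mathrm{span}\{v,Av,\dots,A^{k-1}v\}$, $\mathcal{M}_s$ is the set of real monic polynomials of degree $s$, and $\|\cdot\|$ is the Euclidean norm. For a matrix $B$ and a vector $u$ with $d(B,u)\geq s$, let $P_s(\cdot\,;u)\in\mathcal{M}_s$ (determined with respect to $B$) be the unique monic polynomial with $P_s(B;u)u\perp\mathcal{K}_s(B,u)$. The Arnoldi cross iteration ACI($s$) started at $v_0$ is: for $k=0,1,2,\dots$: $\widetilde w_k=P_s(A;v_k)v_k$ (w.r.t. $A$), $w_k=\widetilde w_k/\|\widetilde w_k\|$, $\widetilde v_{k+1}=P_s(A^T;w_k)w_k$ (w.r.t. $A^T$), $v_{k+1}=\widetilde v_{k+1}/\|\widetilde v_{k+1}\|$. (Under the stated hypotheses all these vectors are nonzero.) *)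

From HB Require Import structures.
From mathcomp Require Import all_boot all_order all_algebra.
From mathcomp Require Import all_classical all_reals all_analysis.
Set Implicit Arguments. Unset Strict Implicit. Unset Printing Implicit Defensive.
Import Order.TTheory GRing.Theory Num.Theory.
Local Open Scope ring_scope.

Section ACI.
Variables (R : realType) (n : nat).

Definition polyapply {m : nat} (p : {poly R}) (A : 'M[R]_n) (X : 'M[R]_(n, m))
  : 'M[R]_(n, m) :=
  \sum_(i < size p) p`_i *: iter i (mulmx A) X.

Definition annihilated_deg {m : nat} (A : 'M[R]_n) (X : 'M[R]_(n, m)) (k : nat) : Prop :=
  exists p : {poly R}, [/\ p \is monic, size p = k.+1 & polyapply p A X = 0].

(* smallest such degree (0 if none, which cannot occur) *)
Definition min_annih_deg {m : nat} (A : 'M[R]_n) (X : 'M[R]_(n, m)) : nat :=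
  match pselect (exists k, `[< annihilated_deg A X k >]) with
  | left e => ex_minn e
  | right _ => 0%N
  end.

Definition minpoly_deg (A : 'M[R]_n) : nat := min_annih_deg A (1%:M : 'M[R]_n).

Definition grade (A : 'M[R]_n) (v : 'cV[R]_n) : nat := min_annih_deg A v.

Definition dotv (u w : 'cV[R]_n) : R := (u^T *m w) 0 0.
Definition enorm (u : 'cV[R]_n) : R := Num.sqrt (dotv u u).

Definition orth_krylov (B : 'M[R]_n) (s : nat) (u x : 'cV[R]_n) : Prop :=
  forall j : nat, (j < s)%N -> dotv (iter j (mulmx B) u) x = 0.

Definition is_Ps (B : 'M[R]_n) (s : nat) (u : 'cV[R]_n) (p : {poly R}) : Prop :=
  [/\ p \is monic, size p = s.+1 & orth_krylov B s u (polyapply p B u)].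

(* P_s(.;u) w.r.t. B (the unique such polynomial when d(B,u) >= s) *)
Definition Ps (B : 'M[R]_n) (s : nat) (u : 'cV[R]_n) : {poly R} :=
  match pselect (exists p, is_Ps B s u p) with
  | left e => proj1_sig (cid e)
  | right _ => 0
  end.

Definition normalize (x : 'cV[R]_n) : 'cV[R]_n := (enorm x)^-1 *: x.

Fixpoint aci_v (A : 'M[R]_n) (s : nat) (v0 : 'cV[R]_n) (k : nat) : 'cV[R]_n :=
  match k with
  | 0%N => v0
  | k'.+1 =>
      let v := aci_v A s v0 k' in
      let w := normalize (polyapply (Ps A s v) A v) in
      normalize (polyapply (Ps A^T s w) A^T w)
  end.

Definition aci_w (A : 'M[R]_n) (s : nat) (v0 : 'cV[R]_n) (k : nat) : 'cV[R]_n :=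
  let v := aci_v A s v0 k in
  normalize (polyapply (Ps A s v) A v).

End ACI.

From HB Require Import structures.
From mathcomp Require Import all_boot all_order all_algebra.
From mathcomp Require Import all_classical all_reals all_analysis.
From mathcomp Require Import ring lra zify.
Import Order.TTheory GRing.Theory Num.Theory.
Import numFieldNormedType.Exports.
Local Open Scope classical_set_scope.
Local Open Scope ring_scope.

(* Write [y_k = P_s(A;v_k) v_k] and [z_k = P_s(A^T;w_k) w_k], so that [w_k]
   and [v_(k+1)] are their normalisations, and put [a_k = |y_k|],
   [b_k = |z_k|].  Since [y_k] is orthogonal to [K_s(A,v_k)], the number
   [<w_k, q(A) v_k>] is the same for every monic [q] of degree [s]; taking
   [q = P_s(A^T;w_k)] and moving [q(A)] across the inner product gives
   [a_k = b_k <v_(k+1), v_k>], and symmetrically [b_k = a_(k+1) <w_(k+1), w_k>].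
   Hence [a_k <= b_k <= a_(k+1)]: the sequence [a] is nondecreasing, bounded
   (by [a_k = <w_k, A^s v_k>]) and positive (by the grade assumption), so its
   increments tend to 0.  Finally, for unit vectors,
   [a_0 |v_(k+1) - v_k|^2 / 2 <= b_k (1 - <v_(k+1), v_k>) = b_k - a_k], and
   likewise for [w]. *)

Set Implicit Arguments. Unset Strict Implicit.

Section RealSequences.
Variable R : realType.
Implicit Types (u d f : R^nat).

Lemma nondecreasing_bounded_increments_cvg0 u :
  {homo u : i j / (i <= j)%N >-> i <= j} -> has_ubound (range u) ->
  (fun k => u k.+1 - u k) @ \oo --> (0 : R).
Proof.
move=> u_nd u_ub; have u_cvg := nondecreasing_cvgn u_nd u_ub.
rewrite -(subrr (sup (range u))); apply: cvgB => //.
by rewrite (cvg_shiftS u).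
Qed.

Lemma cvg0_sq_le (c : R) f d : 0 < c -> (forall k, 0 <= f k) ->
  (forall k, c * f k ^+ 2 <= d k) -> d @ \oo --> (0 : R) -> f @ \oo --> (0 : R).
Proof.
move=> c_gt0 f_ge0 f_le /cvgr0Pnorm_lt d_cvg; apply/cvgr0Pnorm_lt => e e_gt0.
near=> k; rewrite ger0_norm ?f_ge0 //.
have dk_lt : `|d k| < c * e ^+ 2.
  by near: k; apply: d_cvg; rewrite mulr_gt0 // exprn_gt0.
have fk_sq : f k ^+ 2 < e ^+ 2.
  by rewrite -(ltr_pM2l c_gt0); apply: le_lt_trans (f_le k) (le_lt_trans (ler_norm _) dk_lt).
by move: fk_sq; rewrite ltr_pXn2r // nnegrE ?f_ge0 // ltW.
Unshelve. all: by end_near.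
Qed.

End RealSequences.

Section InnerProduct.
Variables (R : realType) (n : nat).
Implicit Types (u w x : 'cV[R]_n) (B : 'M[R]_n).

Lemma dotvE u w : dotv u w = \sum_i u i 0 * w i 0.
Proof. by rewrite /dotv mxE; apply: eq_bigr => i _; rewrite mxE. Qed.

Lemma dotvC u w : dotv u w = dotv w u.
Proof. by rewrite !dotvE; apply: eq_bigr => i _; rewrite mulrC. Qed.

Lemma dotvDr u w x : dotv u (w + x) = dotv u w + dotv u x.
Proof. by rewrite !dotvE -big_split; apply: eq_bigr => i _; rewrite mxE mulrDr. Qed.

Lemma dotvBr u w x : dotv u (w - x) = dotv u w - dotv u x.
Proof.
rewrite dotvDr !dotvE -sumrN; congr (_ + _).
by apply: eq_bigr => i _; rewrite mxE mulrN.
Qed.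

Lemma dotvZr u (c : R) w : dotv u (c *: w) = c * dotv u w.
Proof. by rewrite !dotvE mulr_sumr; apply: eq_bigr => i _; rewrite mxE mulrCA. Qed.

Lemma dotvDl u w x : dotv (w + x) u = dotv w u + dotv x u.
Proof. by rewrite dotvC dotvDr !(dotvC u). Qed.

Lemma dotvBl u w x : dotv (w - x) u = dotv w u - dotv x u.
Proof. by rewrite dotvC dotvBr !(dotvC u). Qed.

Lemma dotvZl u (c : R) w : dotv (c *: u) w = c * dotv u w.
Proof. by rewrite dotvC dotvZr dotvC. Qed.

Lemma dotv_sumr u (I : finType) (F : I -> 'cV[R]_n) :
  dotv u (\sum_i F i) = \sum_i dotv u (F i).
Proof.
elim/big_rec2: _ => [|i y1 y2 _ <-]; last by rewrite dotvDr.
by rewrite !dotvE big1 // => i _; rewrite mxE mulr0.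
Qed.

Lemma dotv_ge0 u : 0 <= dotv u u.
Proof. by rewrite dotvE sumr_ge0 // => i _; rewrite -expr2 sqr_ge0. Qed.

Lemma dotv_eq0 u : dotv u u = 0 -> u = 0.
Proof.
rewrite dotvE => u_eq0; apply/matrixP => i j; rewrite (ord1 j) mxE.
have sq_ge0 k : predT k -> 0 <= u k 0 * u k 0 by rewrite -expr2 sqr_ge0.
have /eqP := psumr_eq0P sq_ge0 u_eq0 (isT : predT i).
by rewrite mulf_eq0 orbb => /eqP.
Qed.

Lemma dotv_le1 u w : dotv u u <= 1 -> dotv w w <= 1 -> dotv u w <= 1.
Proof.
move=> u_le1 w_le1; have := dotv_ge0 (u - w).
rewrite dotvBl !dotvBr (dotvC w u); lra.
Qed.

Lemma coord_le1 u i : dotv u u <= 1 -> `|u i 0| <= 1.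
Proof.
move=> u_le1; have ui_sq : `|u i 0| ^+ 2 <= 1.
  rewrite real_normK ?num_real //; apply: le_trans u_le1.
  rewrite dotvE (bigD1 i) //= expr2 lerDl.
  by apply: sumr_ge0 => k _; rewrite -expr2 sqr_ge0.
by move: ui_sq; rewrite -[X in _ <= X](expr1n _ 2) ler_pXn2r // nnegrE.
Qed.

Lemma dotv_mulmx_le u w (M : 'M[R]_n) : dotv u u <= 1 -> dotv w w <= 1 ->
  dotv u (M *m w) <= \sum_i \sum_j `|M i j|.
Proof.
move=> u_le1 w_le1; rewrite dotvE.
apply: le_trans (ler_norm _) _; apply: le_trans (ler_norm_sum _ _ _) _.
apply: ler_sum => i _; rewrite mxE normrM mulrC.
apply: le_trans (ler_wpM2r (normr_ge0 _) (ler_norm_sum _ _ _)) _.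
rewrite mulr_suml; apply: ler_sum => j _; rewrite normrM -mulrA.
rewrite -[leRHS]mulr1 ler_wpM2l //.
by apply: mulr_ile1 => //; apply: coord_le1.
Qed.

Lemma enorm_ge0 u : 0 <= enorm u.
Proof. exact: sqrtr_ge0. Qed.

Lemma enorm_sq u : enorm u ^+ 2 = dotv u u.
Proof. by rewrite /enorm sqr_sqrtr // dotv_ge0. Qed.

Lemma enorm_eq0 u : enorm u = 0 -> u = 0.
Proof. by move=> u0; apply: dotv_eq0; rewrite -enorm_sq u0 expr0n. Qed.

Lemma enorm_sq_sub u w : dotv u u = 1 -> dotv w w = 1 ->
  enorm (u - w) ^+ 2 = 2 * (1 - dotv u w).
Proof. by move=> u1 w1; rewrite enorm_sq dotvBl !dotvBr u1 w1 (dotvC w u); ring. Qed.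

Lemma normalizeK x : enorm x *: normalize x = x.
Proof.
rewrite /normalize scalerA; have [x0|x_neq0] := eqVneq (enorm x) 0.
  by rewrite (enorm_eq0 x0) scaler0.
by rewrite mulfV // scale1r.
Qed.

Lemma dotv_normalizel x : dotv (normalize x) x = enorm x.
Proof.
rewrite /normalize dotvZl -enorm_sq; have [->|x_neq0] := eqVneq (enorm x) 0.
  by rewrite invr0 mul0r.
by rewrite expr2 mulrA mulVf ?mul1r.
Qed.

Lemma dotv_normalize x :
  dotv (normalize x) (normalize x) = if enorm x == 0 then 0 else 1.
Proof.
rewrite /normalize dotvZl dotvZr -enorm_sq; case: eqP => [->|/eqP x_neq0].
  by rewrite invr0 mul0r.
by field.
Qed.

Lemma dotv_normalize_le1 x : dotv (normalize x) (normalize x) <= 1.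
Proof. by rewrite dotv_normalize; case: ifP. Qed.

Lemma dotv_mulmx B w x : dotv w (B *m x) = dotv (B^T *m w) x.
Proof. by rewrite /dotv trmx_mul trmxK mulmxA. Qed.

Lemma dotv_iter B i w x :
  dotv w (iter i (mulmx B) x) = dotv (iter i (mulmx B^T) w) x.
Proof. by elim: i w => [//|i IH] w; rewrite iterS dotv_mulmx IH -iterSr. Qed.

Lemma dotv_polyapply (p : {poly R}) B w x :
  dotv w (polyapply p B x) = dotv (polyapply p B^T w) x.
Proof.
rewrite /polyapply dotv_sumr dotvC dotv_sumr; apply: eq_bigr => i _.
by rewrite !dotvZr dotv_iter dotvC.
Qed.

End InnerProduct.

Section MinimisingPolynomial.
Variables (R : realType) (n : nat).
Implicit Types (u w x : 'cV[R]_n) (B : 'M[R]_n).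

Lemma polyapply_widen (p : {poly R}) B x N : (size p <= N)%N ->
  polyapply p B x = \sum_(i < N) p`_i *: iter i (mulmx B) x.
Proof.
move=> p_le; rewrite /polyapply (big_ord_widen N (fun i => p`_i *: iter i (mulmx B) x) p_le).
rewrite big_mkcond; apply: eq_bigr => i _; case: ifP => // /negbT.
by rewrite -leqNgt => /(nth_default 0) ->; rewrite scale0r.
Qed.

Lemma iter_mulmxE B i x : iter i (mulmx B) x = iter i (mulmx B) 1%:M *m x.
Proof. by elim: i => [|i IH] /=; rewrite ?mul1mx // IH mulmxA. Qed.

Lemma orth_krylovZ B s u x (c : R) :
  orth_krylov B s u x -> orth_krylov B s u (c *: x).
Proof. by move=> x_orth j j_lt; rewrite dotvZr x_orth // mulr0. Qed.

Lemma dotv_monic_orth_krylov B s u x (q : {poly R}) :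
  orth_krylov B s u x -> q \is monic -> size q = s.+1 ->
  dotv (polyapply q B u) x = dotv (iter s (mulmx B) u) x.
Proof.
move=> x_orth q_monic q_size.
rewrite (polyapply_widen B u (leqnn (size q))) q_size big_ord_recr /=.
rewrite dotvDl dotvC dotv_sumr big1 ?add0r.
  by move: q_monic; rewrite monicE lead_coefE q_size => /eqP ->; rewrite scale1r dotvC.
by move=> i _; rewrite dotvZr dotvC x_orth ?mulr0.
Qed.

(* Solvability of the normal equations [K^T K c = K^T y]: [K^T K] and [K]
   have the same rank because [X K^T K = 0] forces [X K^T = 0]. *)
Lemma normal_equations_solvable (s : nat) (K : 'M[R]_(n, s)) (y : 'cV[R]_n) :
  exists c : 'cV[R]_s, K^T *m (y - K *m c) = 0.
Proof.
set G := K^T *m K.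
have kerG_sub : (kermx G <= kermx K^T)%MS.
  apply/sub_kermxP; set Y := kermx G *m K^T.
  have YYt : Y *m Y^T = 0.
    by rewrite /Y trmx_mul trmxK mulmxA -(mulmxA (kermx G)) mulmx_ker mul0mx.
  apply/matrixP => i j; rewrite [RHS]mxE.
  have : (Y *m Y^T) i i = 0 by rewrite YYt mxE.
  rewrite mxE => Yi_eq0.
  have sq_ge0 k : predT k -> 0 <= Y i k * Y^T k i.
    by rewrite [Y^T _ _]mxE -expr2 sqr_ge0.
  have /eqP := psumr_eq0P sq_ge0 Yi_eq0 (isT : predT j).
  by rewrite [Y^T _ _]mxE mulf_eq0 orbb => /eqP.
have rankK_le : (\rank K <= \rank G)%N.
  have := mxrankS kerG_sub; rewrite !mxrank_ker mxrank_tr.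
  have := rank_leq_row G; have := rank_leq_col K; lia.
have G_sub : (G <= K)%MS by apply: submxMl.
have K_sub : (K <= G)%MS by rewrite -(geq_leqif (mxrank_leqif_sup G_sub)).
have /submxP [D yK] : (y^T *m K <= G)%MS by apply: submx_trans (submxMl _ _) K_sub.
exists D^T.
have Gt : G^T = G by rewrite /G trmx_mul trmxK.
rewrite mulmxBr mulmxA -/G.
have -> : K^T *m y = (y^T *m K)^T by rewrite trmx_mul trmxK.
by rewrite yK trmx_mul Gt subrr.
Qed.

(* [P_s(B;u)] is [X^s - sum_j c_j X^j], with [c] solving the normal equations
   for the Krylov matrix [K = (u, Bu, ..., B^(s-1) u)] and [y = B^s u]. *)
Lemma Ps_exists B s u : exists p, is_Ps B s u p.
Proof.
pose K : 'M[R]_(n, s) := \matrix_(i, j) (iter j (mulmx B) u) i 0.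
have [c c_normal] := normal_equations_solvable K (iter s (mulmx B) u).
pose cf j := if @insub _ (fun k => (k < s)%N) 'I_s j is Some k then c k 0 else 0.
have cfE (i : 'I_s) : cf i = c i 0 by rewrite /cf valK.
pose p : {poly R} := 'X^s - \poly_(j < s) cf j.
have p_size : size p = s.+1.
  by rewrite /p size_polyDl size_polyXn // size_polyN ltnS size_poly.
have pE i : p`_i = (i == s)%:R - (if (i < s)%N then cf i else 0).
  by rewrite /p coefB coefXn coef_poly.
have pu : polyapply p B u = iter s (mulmx B) u - K *m c.
  rewrite (polyapply_widen (N := s.+1) B u) ?p_size // big_ord_recr /= pE.
  rewrite eqxx ltnn subr0 scale1r addrC; congr (_ + _).
  apply/matrixP => k l; rewrite (ord1 l) !mxE summxE -sumrN.
  apply: eq_bigr => i _; rewrite pE (ltn_eqF (ltn_ord i)) ltn_ord sub0r !mxE cfE.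
  by rewrite mulNr mulrC.
exists p; split => //.
  by rewrite monicE lead_coefE p_size /= pE eqxx ltnn subr0.
move=> j j_lt; rewrite pu.
have := congr1 (fun M : 'cV[R]_s => M (Ordinal j_lt) 0) c_normal.
rewrite !mxE /= => <-; rewrite dotvE; apply: eq_bigr => i _.
by congr (_ * _); rewrite !mxE.
Qed.

Lemma Ps_spec B s u : is_Ps B s u (Ps B s u).
Proof.
rewrite /Ps; case: pselect => [e|ne]; first exact: proj2_sig (cid e).
by case: ne; apply: Ps_exists.
Qed.

Lemma enorm_Ps_apply B s u :
  enorm (polyapply (Ps B s u) B u) =
  dotv (normalize (polyapply (Ps B s u) B u)) (iter s (mulmx B) u).
Proof.
have [P_monic P_size P_orth] := Ps_spec B s u.
rewrite -dotv_normalizel dotvC (dotv_monic_orth_krylov _ P_monic P_size).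
  exact: dotvC.
exact: orth_krylovZ.
Qed.

Lemma enorm_Ps_apply_monic B s u (q : {poly R}) : q \is monic -> size q = s.+1 ->
  enorm (polyapply (Ps B s u) B u) =
  dotv (polyapply q B^T (normalize (polyapply (Ps B s u) B u))) u.
Proof.
move=> q_monic q_size; have [_ _ P_orth] := Ps_spec B s u.
rewrite enorm_Ps_apply -dotv_polyapply [RHS]dotvC.
rewrite (dotv_monic_orth_krylov _ q_monic q_size); first exact: dotvC.
exact: orth_krylovZ.
Qed.

Lemma grade_le (A : 'M[R]_n) x k : annihilated_deg A x k -> (grade A x <= k)%N.
Proof.
move=> x_annih; rewrite /grade /min_annih_deg; case: pselect => [e|//].
by case: ex_minnP => m _; apply; apply/asboolP.
Qed.

End MinimisingPolynomial.

Section CrossIteration.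
Variables (R : realType) (n : nat) (A : 'M[R]_n) (s : nat) (v0 : 'cV[R]_n).
Hypotheses (v0_unit : enorm v0 = 1) (grade_v0 : (s.+1 <= grade A v0)%N).

Local Notation v := (aci_v A s v0).
Local Notation w := (aci_w A s v0).

Definition aci_a k := enorm (polyapply (Ps A s (v k)) A (v k)).
Definition aci_b k := enorm (polyapply (Ps A^T s (w k)) A^T (w k)).

Lemma aci_aE k : aci_a k = aci_b k * dotv (v k.+1) (v k).
Proof.
have [P_monic P_size _] := Ps_spec A^T s (w k).
rewrite /aci_a (enorm_Ps_apply_monic _ _ P_monic P_size) -/(w k).
by rewrite -{1}(normalizeK (polyapply _ A^T (w k))) dotvZl.
Qed.

Lemma aci_bE k : aci_b k = aci_a k.+1 * dotv (w k.+1) (w k).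
Proof.
have [P_monic P_size _] := Ps_spec A s (v k.+1).
rewrite /aci_b (enorm_Ps_apply_monic _ _ P_monic P_size) trmxK -/(v k.+1).
by rewrite -{1}(normalizeK (polyapply _ A (v k.+1))) dotvZl.
Qed.

Lemma aci_v_le1 k : dotv (v k) (v k) <= 1.
Proof. by case: k => [|k]; rewrite ?dotv_normalize_le1 //= -enorm_sq v0_unit expr1n. Qed.

Lemma aci_w_le1 k : dotv (w k) (w k) <= 1.
Proof. exact: dotv_normalize_le1. Qed.

Lemma aci_a_le_b k : aci_a k <= aci_b k.
Proof.
rewrite aci_aE -[leRHS]mulr1 ler_wpM2l ?enorm_ge0 //.
exact: dotv_le1 (aci_v_le1 _) (aci_v_le1 _).
Qed.

Lemma aci_b_le_a k : aci_b k <= aci_a k.+1.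
Proof.
rewrite aci_bE -[leRHS]mulr1 ler_wpM2l ?enorm_ge0 //.
exact: dotv_le1 (aci_w_le1 _) (aci_w_le1 _).
Qed.

Lemma aci_a_nondecreasing : {homo aci_a : i j / (i <= j)%N >-> i <= j}.
Proof. by apply/nondecreasing_seqP => k; apply: le_trans (aci_a_le_b k) (aci_b_le_a k). Qed.

Lemma aci_a_bounded : has_ubound (range aci_a).
Proof.
exists (\sum_i \sum_j `|iter s (mulmx A) 1%:M i j|) => _ [k _ <-].
rewrite /aci_a enorm_Ps_apply iter_mulmxE.
exact: dotv_mulmx_le (aci_w_le1 k) (aci_v_le1 k).
Qed.

Lemma aci_a0_gt0 : 0 < aci_a 0.
Proof.
rewrite lt0r enorm_ge0 andbT; apply/eqP => /enorm_eq0 P_v0.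
have [P_monic P_size _] := Ps_spec A s v0.
have : (grade A v0 <= s)%N by apply: grade_le; exists (Ps A s v0).
by rewrite leqNgt grade_v0.
Qed.

Lemma aci_a0_le k : aci_a 0 <= aci_a k.
Proof. exact: aci_a_nondecreasing. Qed.

Lemma aci_w_unit k : dotv (w k) (w k) = 1.
Proof.
rewrite dotv_normalize; case: eqP => // a_eq0.
by have := aci_a0_le k; rewrite /aci_a a_eq0 leNgt aci_a0_gt0.
Qed.

Lemma aci_v_unit k : dotv (v k) (v k) = 1.
Proof.
case: k => [|k]; first by rewrite -enorm_sq v0_unit expr1n.
rewrite dotv_normalize; case: eqP => // b_eq0.
have := le_trans (aci_a0_le k) (aci_a_le_b k).
by rewrite /aci_b b_eq0 leNgt aci_a0_gt0.
Qed.

Lemma aci_w_step_le k :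
  aci_a 0 / 2 * enorm (w k.+1 - w k) ^+ 2 <= aci_a k.+1 - aci_a k.
Proof.
rewrite enorm_sq_sub ?aci_w_unit //.
have := aci_bE k; have := aci_a_le_b k; have := aci_a0_le k.+1.
have := dotv_le1 (aci_w_le1 k.+1) (aci_w_le1 k); nra.
Qed.

Lemma aci_v_step_le k :
  aci_a 0 / 2 * enorm (v k.+1 - v k) ^+ 2 <= aci_a k.+1 - aci_a k.
Proof.
rewrite enorm_sq_sub ?aci_v_unit //.
have := aci_aE k; have := aci_b_le_a k; have := le_trans (aci_a0_le k) (aci_a_le_b k).
have := dotv_le1 (aci_v_le1 k.+1) (aci_v_le1 k); nra.
Qed.

End CrossIteration.

Unset Implicit Arguments. Set Strict Implicit.

Theorem theorem3p4 (R : realType) (n : nat) (A : 'M[R]_n) (s : nat)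
  (v0 : 'cV[R]_n) :
  (1 <= s)%N -> (s < minpoly_deg A)%N ->
  enorm v0 = 1 -> (s.+1 <= grade A v0)%N ->
  (fun k => enorm (aci_w A s v0 k.+1 - aci_w A s v0 k)) @ \oo --> (0 : R) /\
  (fun k => enorm (aci_v A s v0 k.+1 - aci_v A s v0 k)) @ \oo --> (0 : R).
Proof.
move=> _ _ v0_unit grade_v0.
have a_incr_cvg0 := nondecreasing_bounded_increments_cvg0
  (aci_a_nondecreasing A s v0_unit) (aci_a_bounded A s v0_unit).
have a0_gt0 : 0 < aci_a A s v0 0 / 2 by rewrite divr_gt0 ?aci_a0_gt0.
split; apply: (cvg0_sq_le a0_gt0 _ _ a_incr_cvg0) => k; rewrite ?enorm_ge0 //.
  exact: aci_w_step_le v0_unit grade_v0 k.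
exact: aci_v_step_le v0_unit grade_v0 k.
Qed.
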